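(* For any two choices $\boldsymbol{w}^{(1)}=\{w^{(1)}_1,\dots,w^{(1)}_{15}\}$ and $\boldsymbol{w}^{(2)}=\{w^{(2)}_1,\dots,w^{(2)}_{15}\}$ with $v_{w^{(1)}_i},v_{w^{(2)}_i}\in V_i$ for all $i$, the graphs $G^{\boldsymbol{w}^{(1)}}$ and $G^{\boldsymbol{w}^{(2)}}$ are isomorphic.
   Context: The $E_8$ root system $\Psi_{E_8}\subset\mathbb{R}^8$ consists of the 240 vectors $\pm e_i\pm e_j$ ($1\le i<j\le 8$) and all $x\in\{\pm1\}^8$ with $\prod_i x_i=1$. $G_{E_8}$ is the graph with vertices $v_x$, $x\in\Psi_{E_8}$, where $v_x=v_{-x}$, and $v_x\sim v_y$ iff $\langle x,y\rangle=0$. Let $I=\mathrm{diag}(1,1)$, $X=\begin{pmatrix}0&1\\1&0\end{pmatrix}$, $Z=\mathrm{diag}(1,-1)$, $Y=XZ$. For $M=M_1\otimes M_2\otimes M_3$ with $M_i\in\{I,X,Y,Z\}$, $\sigma_M:v_x\mapsto v_{Mx}$ is an automorphism of $G_{E_8}$ and $L=\{\sigma_M\}\cong\mathbb{Z}_2^6$. Let $V_1,\dots,V_{15}$ be the 15 orbits of $L$ on $V(G_{E_8})$. Given vectors $\boldsymbol{w}=\{w_1,\dots,w_{15}\}\subset\Psi_{E_8}$ with $v_{w_i}\in V_i$, the graph $G^{\boldsymbol{w}}$ has vertex set $V(G_{E_8})$; for $s\in V_i$, $t\in V_j$: if $\langle w_i,w_j\rangle\neq0$ then $s\sim t$ in $G^{\boldsymbol{w}}$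 iff $s\sim t$ in $G_{E_8}$; if $\langle w_i,w_j\rangle=0$ then $s\sim t$ in $G^{\boldsymbol{w}}$ iff $s\not\sim t$ in $G_{E_8}$. *)

From HB Require Import structures.
From mathcomp Require Import all_boot all_order all_algebra.
Set Implicit Arguments. Unset Strict Implicit. Unset Printing Implicit Defensive.
Import GRing.Theory Num.Theory.
Local Open Scope ring_scope.

(* Vectors of R^8 with coordinates in {-1,0,1}: value k : 'I_3 encodes k - 1.
   Every E8 root (in the paper's normalisation) has such coordinates. *)
Definition Vec := {ffun 'I_8 -> 'I_3}.

Definition coord (x : Vec) (i : 'I_8) : int := ((x i : nat)%:Z - 1)%R.

Definition dot (x y : Vec) : int := \sum_(i < 8) coord x i * coord y i.

Definition is_root (x : Vec) : bool :=
  (#|[pred i | coord x i != 0]| == 2)%N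
  || ([forall i, coord x i != 0] && (\prod_(i < 8) coord x i == 1)).

Definition negv (x : Vec) : Vec := [ffun i => inord (2 - (x i : nat))%N].

Definition is_vertex (A : {set Vec}) : bool :=
  [exists x, is_root x && (A == [set x; negv x])].

Definition Vertex := {A : {set Vec} | is_vertex A}.

(* v_x ~ v_y in G_{E8} iff <x,y> = 0 (independent of the sign choice). *)
Definition adjE8 (u v : Vertex) : bool :=
  [exists x in val u, exists y in val v, dot x y == 0].

(* Pauli matrices, indexed 0=I, 1=X, 2=Y=XZ, 3=Z; entries (r,c) with r,c in {0,1}. *)
Definition pauli (p : 'I_4) (r c : nat) : int :=
  match nat_of_ord p with
  | 0 => if r == c then 1 else 0
  | 1 => if r != c then 1 else 0
  | 2 => if (r == 0%N) && (c == 1%N) then -1 else if (r == 1%N) && (c == 0%N) then 1 else 0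
  | _ => if r == c then (if r == 0%N then 1 else -1) else 0
  end.

(* Kronecker product M1 (x) M2 (x) M3, index i <-> bits (i/4, (i/2)%2, i%2). *)
Definition tens3 (p : 'I_4 * 'I_4 * 'I_4) (i j : 'I_8) : int :=
  pauli p.1.1 (i %/ 4) (j %/ 4) * pauli p.1.2 ((i %/ 2) %% 2) ((j %/ 2) %% 2)
  * pauli p.2 (i %% 2) (j %% 2).

Definition applyM (p : 'I_4 * 'I_4 * 'I_4) (x : Vec) (i : 'I_8) : int :=
  \sum_(j < 8) tens3 p i j * coord x j.

Definition sameOrbit (u v : Vertex) : bool :=
  [exists p, exists x in val u, exists y in val v,
     [forall i, coord y i == applyM p x i]].

(* A choice w = {w_1,...,w_15}: encoded as a map assigning to each vertex s the
   vector w_i of its orbit V_i; it is constant on orbits, w_i is a root, and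
   v_{w_i} lies in V_i. *)
Definition valid_choice (w : Vertex -> Vec) : Prop :=
  (forall s, is_root (w s) /\ exists u : Vertex, w s \in val u /\ sameOrbit s u)
  /\ (forall s t, sameOrbit s t -> w s = w t).

Definition adjGw (w : Vertex -> Vec) (s t : Vertex) : bool :=
  if dot (w s) (w t) != 0 then adjE8 s t else ~~ adjE8 s t.

(* The Pauli words (tensor products of three of I, X, Y = XZ, Z) form, up to
   sign, a group L = Z_2^6 acting on G_E8 by automorphisms, with orbits V_i.
   For each orbit choose g_i in L with g_i v_(w1_i) = v_(w2_i) and send s in V_i
   to g_i s.  Inside an orbit this is an automorphism and both choices are
   constant.  Between orbits everything rests on one fact: for s, t in different
   orbits, g |-> [s ~ g t] is an affine map from L to Z_2.  Writing w1_i = a s and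
   w1_j = b t, the four adjacencies to compare are the values of that map at
   0, b - a, g_j - g_i and (b - a) + (g_j - g_i).  Affineness is unchanged when
   s and t move inside their orbits, so it is checked by computation on one root
   per orbit. *)

From HB Require Import structures.
From mathcomp Require Import all_boot all_order all_algebra zify ring.
(* Imported last, so that Defs.coord shadows vector.coord. *)
From Pilot Require Import Defs.
Set Implicit Arguments. Unset Strict Implicit. Unset Printing Implicit Defensive.
Import GRing.Theory.
Local Open Scope ring_scope.

Definition affine_bool (L : zmodType) (phi : L -> bool) :=
  forall g h, phi (g + h) (+) phi g = phi h (+) phi 0.

Lemma eq_affine_bool (L : zmodType) (phi psi : L -> bool) :
  phi =1 psi -> affine_bool phi -> affine_bool psi.
Proof. by move=> e aff g h; rewrite -!e. Qed.

Lemma affine_bool_shift (L : zmodType) (phi : L -> bool) m :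
  affine_bool phi -> affine_bool (fun g => phi (g + m)).
Proof.
move=> aff g h /=; rewrite add0r -addrA.
move: (aff g (h + m)) (aff g m).
move: (phi (g + (h + m))) (phi g) (phi (h + m)) (phi 0) (phi (g + m)) (phi m).
by do 6!case.
Qed.

Section Switching.

Variables (L : finZmodType) (V : finType) (act : L -> V -> V) (adj : rel V).
Hypothesis act0 : forall s, act 0 s = s.
Hypothesis actD : forall g h s, act (g + h) s = act g (act h s).
Hypothesis adj_act : forall g s t, adj (act g s) (act g t) = adj s t.

Definition same_orbit s t := [exists g, act g s == t].

Lemma same_orbitP s t : reflect (exists g, act g s = t) (same_orbit s t).
Proof. by apply: (iffP existsP) => -[g /eqP]; exists g. Qed.

Lemma actK g : cancel (act g) (act (- g)).
Proof. by move=> s; rewrite -actD addNr act0. Qed.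

Lemma same_orbit_act g s : same_orbit s (act g s).
Proof. by apply/same_orbitP; exists g. Qed.

Lemma same_orbit_sym s t : same_orbit s t -> same_orbit t s.
Proof. by case/same_orbitP => g <-; apply/same_orbitP; exists (- g); rewrite actK. Qed.

Lemma same_orbit_trans s t u : same_orbit s t -> same_orbit t u -> same_orbit s u.
Proof.
by case/same_orbitP => g <- /same_orbitP [h <-]; apply/same_orbitP; exists (h + g); rewrite actD.
Qed.

Lemma adj_act_shift g h s t : adj (act g s) (act h t) = adj s (act (h - g) t).
Proof. by rewrite -(adj_act (- g)) actK addrC actD. Qed.

Lemma affine_orbit_invariant a b s t :
  affine_bool (fun g => adj (act a s) (act g (act b t))) ->
  affine_bool (fun g => adj s (act g t)).
Proof.
move=> /(affine_bool_shift (a - b)); apply: eq_affine_bool => g.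
by rewrite -actD adj_act_shift addrA addrNK addrK.
Qed.

Hypothesis adj_affine :
  forall s t, ~~ same_orbit s t -> affine_bool (fun g => adj s (act g t)).

Definition orbit_choice (w : V -> V) :=
  (forall s, same_orbit s (w s)) /\ (forall s t, same_orbit s t -> w s = w t).

Definition switched (w : V -> V) : rel V := fun s t => adj (w s) (w t) (+) adj s t.

Section Relabelling.

Variables w1 w2 : V -> V.
Hypotheses (w1P : orbit_choice w1) (w2P : orbit_choice w2).

Definition transporter s : L := odflt 0 [pick g | act g (w1 s) == w2 s].

Lemma act_transporter s : act (transporter s) (w1 s) = w2 s.
Proof.
rewrite /transporter; case: pickP => [g /eqP //| none].
have /same_orbitP [g eg] : same_orbit (w1 s) (w2 s).
  by apply: same_orbit_trans (w2P.1 s); apply: same_orbit_sym (w1P.1 s).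
by have := none g; rewrite eg eqxx.
Qed.

Lemma transporter_orbit s t : same_orbit s t -> transporter s = transporter t.
Proof. by move=> st; rewrite /transporter (w1P.2 _ _ st) (w2P.2 _ _ st). Qed.

Definition relabel s := act (transporter s) s.

Lemma orbit_choice_relabel w s : orbit_choice w -> w (relabel s) = w s.
Proof. by case=> _ wP; symmetry; apply/wP/same_orbit_act. Qed.

Lemma relabel_inj : injective relabel.
Proof.
move=> s t e; have st : same_orbit s t.
  apply: same_orbit_trans (same_orbit_act (transporter s) s) _.
  by rewrite -/(relabel s) e same_orbit_sym ?same_orbit_act.
by have := congr1 (act (- transporter t)) e; rewrite /relabel actK (transporter_orbit st) actK.
Qed.

Lemma switched_relabel s t : switched w1 s t = switched w2 (relabel s) (relabel t).
Proof.
rewrite /switched !orbit_choice_relabel // /relabel.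
rewrite -(act_transporter s) -(act_transporter t).
have [st | nst] := boolP (same_orbit s t).
  by rewrite (transporter_orbit st) !adj_act (w1P.2 _ _ st).
have /same_orbitP [a <-] := w1P.1 s; have /same_orbitP [b <-] := w1P.1 t.
rewrite -!actD !adj_act_shift.
have := adj_affine nst (b - a) (transporter t - transporter s).
set x := b - a; set y := transporter t - _.
have -> : transporter t + b - (transporter s + a) = x + y.
  by rewrite /x /y opprD addrACA addrC.
rewrite act0; move: (adj s (act (x + y) t)) (adj s (act x t)) (adj s (act y t)) (adj s t).
by do 4!case.
Qed.

End Relabelling.

Theorem switched_isomorphic w1 w2 : orbit_choice w1 -> orbit_choice w2 ->
  exists f : V -> V, bijective f /\ forall s t, switched w1 s t = switched w2 (f s) (f t).
Proof.
move=> w1P w2P; exists (relabel w1 w2); split; first exact/injF_bij/relabel_inj.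
exact: switched_relabel.
Qed.

End Switching.

(* A letter (x, z) stands for the Pauli matrix X^x Z^z (so (1, 1) is Y = XZ),
   and a word (a, b, c) for the tensor product of its three letters. *)
Definition Letter := ('Z_2 * 'Z_2)%type.
Definition Pword := (Letter * Letter * Letter)%type.
HB.instance Definition _ := Finite.on Pword.
HB.instance Definition _ := GRing.Zmodule.on Pword.

Definition pauli_index (a : Letter) : 'I_4 :=
  inZp (if a.2 == 0 then nat_of_ord a.1 else (3 - a.1)%N).

Definition pauli_word (g : Pword) := (pauli_index g.1.1, pauli_index g.1.2, pauli_index g.2).

Lemma pauli_index_onto (k : 'I_4) : exists a, pauli_index a = k.
Proof.
case: k => -[|[|[|[|//]]]] lt_k4; [exists (0, 0) | exists (1, 0) | exists (1, 1) | exists (0, 1)];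
  exact: val_inj.
Qed.

Lemma pauli_word_onto p : exists g, pauli_word g = p.
Proof.
case: p => -[p1 p2] p3; have [a <-] := pauli_index_onto p1.
by have [b <-] := pauli_index_onto p2; have [c <-] := pauli_index_onto p3; exists (a, b, c).
Qed.

Definition letters : seq Letter := [:: (0, 0); (1, 0); (1, 1); (0, 1)].

Definition pwords : seq Pword :=
  [seq (ab, c) | ab <- [seq (a, b) | a <- letters, b <- letters], c <- letters].

Lemma mem_letters a : a \in letters.
Proof. by case: a => -[[|[|//]] ?] [[|[|//]] ?]. Qed.

Lemma mem_pwords g : g \in pwords.
Proof. by case: g => -[a b] c; rewrite !allpairs_f ?mem_letters. Qed.

Lemma forall_pwords (P : pred Pword) : all P pwords -> forall g, P g.
Proof. by move=> /allP PP g; apply/PP/mem_pwords. Qed.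

Definition ords8 : seq 'I_8 := [seq inZp i | i <- iota 0 8].

Lemma mem_ords8 i : i \in ords8.
Proof. by apply/mapP; exists (nat_of_ord i); rewrite ?mem_iota ?ltn_ord ?valZpK. Qed.

Lemma forall_ords8 (P : pred 'I_8) : all P ords8 -> forall i, P i.
Proof. by move=> /allP PP i; apply/PP/mem_ords8. Qed.

Lemma big_ords8 (R : Type) (idx : R) (op : Monoid.com_law idx) (P : pred 'I_8) F :
  \big[op/idx]_(i < 8 | P i) F i = \big[op/idx]_(i <- ords8 | P i) F i.
Proof.
apply/perm_big/uniq_perm; [exact: index_enum_uniq | by [] |].
by move=> i; rewrite mem_index_enum mem_ords8.
Qed.

(* Row r of X^x Z^z has its nonzero entry (-1)^(z c) in column c = r + x (mod 2);
   indices of R^8 are read as bit triples (i / 4, i / 2 mod 2, i mod 2), as in tens3. *)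
Definition letter_col (a : Letter) (r : nat) : nat := (r + a.1) %% 2.
Definition letter_neg (a : Letter) (r : nat) : bool := odd (a.2 * letter_col a r).

Definition pperm (g : Pword) (i : 'I_8) : 'I_8 :=
  inZp (4 * letter_col g.1.1 (i %/ 4) + 2 * letter_col g.1.2 (i %/ 2 %% 2)
        + letter_col g.2 (i %% 2)).

Definition pneg (g : Pword) (i : 'I_8) : bool :=
  letter_neg g.1.1 (i %/ 4) (+) letter_neg g.1.2 (i %/ 2 %% 2) (+) letter_neg g.2 (i %% 2).

Definition psign (g : Pword) (i : 'I_8) : int := (-1) ^+ pneg g i.

Lemma tens3_pauli_word g i j :
  tens3 (pauli_word g) i j = if j == pperm g i then psign g i else 0.
Proof.
apply/eqP; move: j; apply: forall_ords8; move: i; apply: forall_ords8.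
by move: g; apply: forall_pwords; vm_compute.
Qed.

Lemma psign_sqr g i : psign g i * psign g i = 1.
Proof. by rewrite /psign -signr_addb addbb. Qed.

Lemma pperm_involutive g : involutive (pperm g).
Proof.
move=> i; apply/eqP; move: i; apply: forall_ords8.
by move: g; apply: forall_pwords; vm_compute.
Qed.

Lemma pperm_inj g : injective (pperm g).
Proof. exact/inv_inj/pperm_involutive. Qed.

Lemma pperm0 i : pperm 0 i = i.
Proof. by apply/eqP; move: i; apply: forall_ords8; vm_compute. Qed.

Lemma psign0 i : psign 0 i = 1.
Proof. by apply/eqP; move: i; apply: forall_ords8; vm_compute. Qed.

Lemma pperm_add g h i : pperm h (pperm g i) = pperm (g + h) i.
Proof.
apply/eqP; move: i; apply: forall_ords8; move: h; apply: forall_pwords.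
by move: g; apply: forall_pwords; vm_compute.
Qed.

Lemma psign_add g h : exists c : bool,
  forall i, psign g i * psign h (pperm g i) = (-1) ^+ c * psign (g + h) i.
Proof.
exists (pneg g 0 (+) pneg h (pperm g 0) (+) pneg (g + h) 0) => i.
rewrite /psign -!signr_addb.
suff -> : pneg g i (+) pneg h (pperm g i)
          = pneg g 0 (+) pneg h (pperm g 0) (+) pneg (g + h) 0 (+) pneg (g + h) i by [].
apply/eqP; move: i; apply: forall_ords8; move: h; apply: forall_pwords.
by move: g; apply: forall_pwords; vm_compute.
Qed.

Lemma prod_psign g : \prod_(i < 8) psign g i = 1.
Proof.
rewrite big_ords8 -(big_map (psign g) xpredT id) -foldrE; apply/eqP.
by move: g; apply: forall_pwords; vm_compute.
Qed.

Lemma coord_inj x y : coord x =1 coord y -> x = y.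
Proof.
move=> e; apply/ffunP => i; apply/val_inj.
by have := e i; rewrite /coord => /addIr [].
Qed.

Lemma coord_negv x i : coord (negv x) i = - coord x i.
Proof.
have x_lt3 := ltn_ord (x i).
rewrite /coord /negv ffunE inordK; last by rewrite ltnS leq_subr.
lia.
Qed.

Lemma negvK : involutive negv.
Proof. by move=> x; apply/coord_inj => i; rewrite !coord_negv opprK. Qed.

Lemma dotNl x y : dot (negv x) y = - dot x y.
Proof. by rewrite /dot -sumrN; apply: eq_bigr => i _; rewrite coord_negv mulNr. Qed.

Lemma dotNr x y : dot x (negv y) = - dot x y.
Proof. by rewrite /dot -sumrN; apply: eq_bigr => i _; rewrite coord_negv mulrN. Qed.

Definition Mvec (g : Pword) (x : Vec) : Vec :=
  [ffun i => (if pneg g i then negv x else x) (pperm g i)].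

Lemma coord_Mvec g x i : coord (Mvec g x) i = psign g i * coord x (pperm g i).
Proof.
by rewrite {1}/coord ffunE /psign mulr_sign; case: (pneg g i); rewrite -/(coord _ _) ?coord_negv.
Qed.

Lemma applyM_pauli_word g x i : applyM (pauli_word g) x i = coord (Mvec g x) i.
Proof.
rewrite /applyM (bigD1 (pperm g i)) //= tens3_pauli_word eqxx coord_Mvec.
by rewrite big1 ?addr0 // => j /negbTE ne; rewrite tens3_pauli_word ne mul0r.
Qed.

Lemma Mvec0 x : Mvec 0 x = x.
Proof. by apply/coord_inj => i; rewrite coord_Mvec psign0 pperm0 mul1r. Qed.

Lemma MvecN g x : Mvec g (negv x) = negv (Mvec g x).
Proof. by apply/coord_inj => i; rewrite coord_Mvec !coord_negv coord_Mvec mulrN. Qed.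

Lemma MvecD g h x :
  Mvec g (Mvec h x) = Mvec (g + h) x \/ Mvec g (Mvec h x) = negv (Mvec (g + h) x).
Proof.
have [c cE] := psign_add g h.
have E i : coord (Mvec g (Mvec h x)) i
           = if c then - coord (Mvec (g + h) x) i else coord (Mvec (g + h) x) i.
  by rewrite !coord_Mvec mulrA cE pperm_add -mulrA mulr_sign.
by case: c {cE} E => E; [right | left]; apply/coord_inj => i; rewrite E ?coord_negv.
Qed.

Lemma dot_Mvec g x y : dot (Mvec g x) (Mvec g y) = dot x y.
Proof.
rewrite /dot [RHS](reindex_inj (@pperm_inj g)); apply: eq_bigr => i _.
by rewrite !coord_Mvec mulrACA psign_sqr mul1r.
Qed.

Lemma is_root_Mvec g x : is_root (Mvec g x) = is_root x.
Proof.
have nz i : (coord (Mvec g x) i != 0) = (coord x (pperm g i) != 0).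
  by rewrite coord_Mvec mulf_eq0 signr_eq0.
have card_nz : #|[pred i | coord (Mvec g x) i != 0]| = #|[pred i | coord x i != 0]|.
  by rewrite -!sum1_card [RHS](reindex_inj (@pperm_inj g)); apply: eq_bigl => i; rewrite !inE nz.
have all_nz : [forall i, coord (Mvec g x) i != 0] = [forall i, coord x i != 0].
  apply/forallP/forallP => nzx i; first by rewrite -(pperm_involutive g i) -nz.
  by rewrite nz.
have prod_coord : \prod_(i < 8) coord (Mvec g x) i = \prod_(i < 8) coord x i.
  rewrite (eq_bigr _ (fun i _ => coord_Mvec g x i)) big_split /= prod_psign mul1r.
  by rewrite [RHS](reindex_inj (@pperm_inj g)).
by rewrite /is_root card_nz all_nz prod_coord.
Qed.

Lemma vertexP (u : Vertex) : exists2 x, is_root x & val u = [set x; negv x].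
Proof. by have /existsP [x /andP [rx /eqP ->]] := valP u; exists x. Qed.

Lemma vertex_root (u : Vertex) : exists2 x, is_root x & x \in val u.
Proof. by have [x rx ->] := vertexP u; exists x; rewrite // !inE eqxx. Qed.

Lemma mem_vertex (u : Vertex) x : x \in val u -> val u = [set x; negv x].
Proof.
have [r _ ->] := vertexP u; rewrite !inE => /orP [] /eqP -> //.
by rewrite negvK setUC.
Qed.

Lemma vertex_eq (u v : Vertex) x : x \in val u -> x \in val v -> u = v.
Proof. by move=> /mem_vertex eu /mem_vertex ev; apply: val_inj; rewrite eu ev. Qed.

Lemma vertex_negv (u : Vertex) x : x \in val u -> negv x \in val u.
Proof. by move=> /mem_vertex ->; rewrite !inE eqxx orbT. Qed.

Lemma adjE8_mem (u v : Vertex) x y :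
  x \in val u -> y \in val v -> adjE8 u v = (dot x y == 0).
Proof.
move=> /mem_vertex eu /mem_vertex ev; rewrite /adjE8 eu ev.
apply/existsP/idP => [[x' /andP [x'u /existsP [y' /andP [y'v o]]]] | o].
  move: x'u y'v o; rewrite !inE => /orP [] /eqP -> /orP [] /eqP ->;
    by rewrite ?dotNl ?dotNr ?oppr_eq0.
by exists x; rewrite !inE eqxx /=; apply/existsP; exists y; rewrite !inE eqxx.
Qed.

Lemma is_vertex_Mvec g (u : Vertex) : is_vertex (Mvec g @: val u).
Proof.
have [r rr ->] := vertexP u; apply/existsP; exists (Mvec g r).
by rewrite is_root_Mvec rr imsetU1 imset_set1 MvecN eqxx.
Qed.

Definition vact g (u : Vertex) : Vertex := Sub (Mvec g @: val u) (is_vertex_Mvec g u).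

Lemma mem_vact g (u : Vertex) x : x \in val u -> Mvec g x \in val (vact g u).
Proof. exact: imset_f. Qed.

Lemma vact0 u : vact 0 u = u.
Proof. by have [x _ xu] := vertex_root u; apply: vertex_eq (mem_vact 0 xu) _; rewrite Mvec0. Qed.

Lemma vactD g h u : vact (g + h) u = vact g (vact h u).
Proof.
have [x _ xu] := vertex_root u; apply: (vertex_eq (mem_vact (g + h) xu)).
have := mem_vact g (mem_vact h xu).
by case: (MvecD g h x) => -> //; move/vertex_negv; rewrite negvK.
Qed.

Lemma adjE8_vact g u v : adjE8 (vact g u) (vact g v) = adjE8 u v.
Proof.
have [x _ xu] := vertex_root u; have [y _ yv] := vertex_root v.
by rewrite (adjE8_mem (mem_vact g xu) (mem_vact g yv)) (adjE8_mem xu yv) dot_Mvec.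
Qed.

Lemma sameOrbit_vact u v : sameOrbit u v = same_orbit vact u v.
Proof.
apply/existsP/same_orbitP => [[p /existsP [x /andP [xu]]] | [g <-]].
  case/existsP=> y /andP [yv /forallP yE].
  have [g gp] := pauli_word_onto p; exists g; apply: vertex_eq (mem_vact g xu) _.
  suff -> : Mvec g x = y by [].
  by apply/coord_inj => i; rewrite -applyM_pauli_word gp; apply/esym/eqP/yE.
have [x _ xu] := vertex_root u; exists (pauli_word g); apply/existsP; exists x.
rewrite xu; apply/existsP; exists (Mvec g x); rewrite mem_vact //=.
by apply/forallP => i; rewrite applyM_pauli_word.
Qed.

(* Finite functions and big operators do not reduce under vm_compute, so the
   computations on roots below run on coordinate lists. *)
Definition coords (x : Vec) : seq int := [seq coord x i | i <- ords8].

Definition Mseq (g : Pword) (l : seq int) : seq int :=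
  [seq let z := nth 0 l (pperm g i) in if pneg g i then - z else z | i <- ords8].

Definition dot_seq (u v : seq int) : int :=
  foldr +%R 0 [seq nth 0 u i * nth 0 v i | i : 'I_8 <- ords8].

Definition opp_seq (l : seq int) : seq int := [seq - z | z <- l].

Definition is_root_seq (l : seq int) : bool :=
  (count (fun z => z != 0) l == 2%N)
  || (all (fun z => z != 0) l && (foldr *%R 1 l == 1)).

Lemma nth_coords x (i : 'I_8) : nth 0 (coords x) i = coord x i.
Proof.
rewrite /coords /ords8 -map_comp (nth_map 0%N) ?size_iota //.
by rewrite nth_iota //= valZpK.
Qed.

Lemma coords_inj : injective coords.
Proof. by move=> x y e; apply/coord_inj => i; rewrite -!nth_coords e. Qed.

Lemma coords_negv x : coords (negv x) = opp_seq (coords x).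
Proof. by rewrite /opp_seq /coords -[RHS]map_comp; apply/eq_map => i; apply: coord_negv. Qed.

Lemma coords_Mvec g x : coords (Mvec g x) = Mseq g (coords x).
Proof. by apply/eq_map => i; rewrite coord_Mvec nth_coords /psign mulr_sign. Qed.

Lemma dot_coords x y : dot x y = dot_seq (coords x) (coords y).
Proof.
rewrite /dot big_ords8 /dot_seq foldrE [RHS]big_map.
by apply: eq_bigr => i _; rewrite !nth_coords.
Qed.

Lemma is_root_coords x : is_root x = is_root_seq (coords x).
Proof.
rewrite /is_root /is_root_seq count_map all_map foldrE big_map -big_ords8.
have -> : #|[pred i | coord x i != 0]| = count (preim (coord x) (fun z => z != 0)) ords8.
  by rewrite -sum1_card big_ords8 sum1_count; apply: eq_count => i; rewrite !inE.
suff -> : [forall i, coord x i != 0] = all (preim (coord x) (fun z => z != 0)) ords8 by [].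
by apply/forallP/allP => [nz i _ | nz i]; [apply: nz | apply/nz/mem_ords8].
Qed.

Definition trits : seq int := [:: -1; 0; 1].

Definition trit_seqs : seq (seq int) :=
  iter 8 (fun ls => [seq z :: l | z <- trits, l <- ls]) [:: [::]].

Lemma mem_iter_cons (T : eqType) (A : seq T) n l : size l = n -> all (mem A) l ->
  l \in iter n (fun ls => [seq z :: l | z <- A, l <- ls]) [:: [::]].
Proof.
elim: n l => [|n IHn] [|z l] //= [sz] /andP [zA lA].
by apply: allpairs_f => //; apply: IHn.
Qed.

Definition root_seqs : seq (seq int) := [seq l <- trit_seqs | is_root_seq l].

Lemma coords_root_seqs x : is_root x -> coords x \in root_seqs.
Proof.
rewrite mem_filter -is_root_coords => -> /=; apply: mem_iter_cons; first by rewrite size_map.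
apply/allP => _ /mapP [i _ ->]; rewrite /coord.
by case: (x i) => -[|[|[|//]]].
Qed.

Definition eq_upto_sign (u v : seq int) : bool := (u == v) || (opp_seq u == v).

Definition orbit_reps : seq (seq int) :=
  [:: [:: 1; 1; 0; 0; 0; 0; 0; 0]; [:: 1; 0; 1; 0; 0; 0; 0; 0];
      [:: 1; 0; 0; 1; 0; 0; 0; 0]; [:: 1; 0; 0; 0; 1; 0; 0; 0];
      [:: 1; 0; 0; 0; 0; 1; 0; 0]; [:: 1; 0; 0; 0; 0; 0; 1; 0];
      [:: 1; 0; 0; 0; 0; 0; 0; 1]; [:: 1; 1; 1; 1; 1; 1; 1; 1];
      [:: 1; 1; 1; 1; 1; 1; -1; -1]; [:: 1; 1; 1; 1; 1; -1; 1; -1];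
      [:: 1; 1; 1; 1; 1; -1; -1; 1]; [:: 1; 1; 1; -1; 1; 1; 1; -1];
      [:: 1; 1; 1; -1; 1; 1; -1; 1]; [:: 1; 1; 1; -1; 1; -1; 1; 1];
      [:: 1; 1; 1; -1; -1; 1; 1; 1]].

Lemma root_seqs_orbit_reps :
  all (fun l => has (fun g => has (eq_upto_sign (Mseq g l)) orbit_reps) pwords) root_seqs.
Proof. by vm_compute. Qed.

Lemma vertex_cover (s : Vertex) :
  exists a, exists2 u, u \in val (vact a s) & coords u \in orbit_reps.
Proof.
have [x rx xs] := vertex_root s.
have /hasP [a _ /hasP [r rR]] := allP root_seqs_orbit_reps _ (coords_root_seqs rx).
rewrite /eq_upto_sign -coords_Mvec -coords_negv => /orP [] /eqP eqr; exists a.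
  by exists (Mvec a x); rewrite ?eqr // mem_vact.
by exists (negv (Mvec a x)); rewrite ?eqr // vertex_negv ?mem_vact.
Qed.

Definition pdot (d g : Pword) : 'Z_2 :=
  d.1.1.1 * g.1.1.1 + d.1.1.2 * g.1.1.2 + d.1.2.1 * g.1.2.1 + d.1.2.2 * g.1.2.2
  + d.2.1 * g.2.1 + d.2.2 * g.2.2.

Lemma pdotD d g h : pdot d (g + h) = pdot d g + pdot d h.
Proof. by rewrite /pdot /=; ring. Qed.

Lemma Z2_neq0D (a b : 'Z_2) : (a + b != 0) = (a != 0) (+) (b != 0).
Proof. by case: a => -[|[|//]] ?; case: b => -[|[|//]] ?. Qed.

Lemma affine_bool_pdot (phi : Pword -> bool) d :
  (forall g, phi g = phi 0 (+) (pdot d g != 0)) -> affine_bool phi.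
Proof.
move=> phiE g h; rewrite (phiE (g + h)) (phiE g) (phiE h) pdotD Z2_neq0D.
by move: (phi 0) (pdot d g != 0) (pdot d h != 0); do 3!case.
Qed.

(* An affine phi equals phi 0 (+) <d, .>, with d read off from the six unit
   words; checking this on the 64 words is far cheaper than checking all pairs. *)
Definition affine_dual (phi : Pword -> bool) : Pword :=
  let c (e : Pword) : 'Z_2 := (phi e (+) phi 0 : nat)%:R in
  ((c ((1, 0), 0, 0), c ((0, 1), 0, 0)), (c (0, (1, 0), 0), c (0, (0, 1), 0)),
   (c (0, 0, (1, 0)), c (0, 0, (0, 1)))).

Definition affine_certified (phi : Pword -> bool) : bool :=
  let d := affine_dual phi in let c := phi 0 in
  all (fun g => phi g == c (+) (pdot d g != 0)) pwords.

Lemma affine_certifiedP phi : affine_certified phi -> affine_bool phi.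
Proof.
move=> /allP cert; apply: (@affine_bool_pdot _ (affine_dual phi)) => g.
exact/eqP/cert/mem_pwords.
Qed.

Definition orbit_related (u v : seq int) : bool :=
  has (fun g => eq_upto_sign (Mseq g u) v) pwords.

Lemma orbit_reps_affine : all (fun u => all (fun v =>
    affine_certified (fun g => dot_seq u (Mseq g v) == 0) || orbit_related u v)
  orbit_reps) orbit_reps.
Proof. by vm_compute. Qed.

Lemma orbit_related_same_orbit (s t : Vertex) u v : u \in val s -> v \in val t ->
  orbit_related (coords u) (coords v) -> same_orbit vact s t.
Proof.
move=> us vt /hasP [m _]; rewrite /eq_upto_sign -coords_Mvec -coords_negv.
case/orP => /eqP /coords_inj Mu; apply/same_orbitP; exists m.
  by apply: (vertex_eq (mem_vact m us)); rewrite Mu.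
by apply: (vertex_eq (mem_vact m us)); rewrite -[Mvec m u]negvK Mu vertex_negv.
Qed.


Lemma adjE8_affine s t : ~~ same_orbit vact s t -> affine_bool (fun g => adjE8 s (vact g t)).
Proof.
move=> nst; have [a [u us uR]] := vertex_cover s; have [b [v vt vR]] := vertex_cover t.
apply: (affine_orbit_invariant vact0 vactD adjE8_vact (a := a) (b := b)).
have /orP [cert | rel] := allP (allP orbit_reps_affine _ uR) _ vR; last first.
  case/negP: nst; apply: (same_orbit_trans vactD (same_orbit_act vact a s)).
  apply: (same_orbit_trans vactD (orbit_related_same_orbit us vt rel)).
  exact: (same_orbit_sym vact0 vactD (same_orbit_act vact b t)).
apply: eq_affine_bool (affine_certifiedP cert) => g.
by rewrite (adjE8_mem us (mem_vact g vt)) dot_coords coords_Mvec.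
Qed.

Lemma adjGw_switched w (wv : Vertex -> Vertex) : (forall s, w s \in val (wv s)) ->
  forall s t, adjGw w s t = switched adjE8 wv s t.
Proof.
move=> wv_mem s t; rewrite /adjGw /switched (adjE8_mem (wv_mem s) (wv_mem t)).
by case: (dot _ _ == 0); case: adjE8.
Qed.

Lemma valid_choice_vertex w : valid_choice w ->
  exists2 wv : Vertex -> Vertex, orbit_choice vact wv & forall s, w s \in val (wv s).
Proof.
case=> wP w_orbit; pose wv s := odflt s [pick u : Vertex | w s \in val u].
have wv_mem s : w s \in val (wv s).
  rewrite /wv; case: pickP => [//| none]; have [_ [u [wu _]]] := wP s.
  by have := none u; rewrite wu.
exists wv => //; split => [s | s t st].
  by have [_ [u [wu su]]] := wP s; rewrite -(vertex_eq wu (wv_mem s)) -sameOrbit_vact.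
by apply: (vertex_eq (wv_mem s)); rewrite (w_orbit s t) ?sameOrbit_vact.
Qed.

Theorem corollary3p11 (w1 w2 : Vertex -> Vec) :
  valid_choice w1 -> valid_choice w2 ->
  exists f : Vertex -> Vertex,
    bijective f /\ forall s t : Vertex, adjGw w1 s t = adjGw w2 (f s) (f t).
Proof.
move=> /valid_choice_vertex [wv1 wv1P w1_mem] /valid_choice_vertex [wv2 wv2P w2_mem].
have [f [f_bij fE]] := switched_isomorphic vact0 vactD adjE8_vact adjE8_affine wv1P wv2P.
by exists f; split=> // s t; rewrite (adjGw_switched w1_mem) (adjGw_switched w2_mem).
Qed.
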